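(* Consider an asymptotic regime indexed by the sample size $n\to\infty$, with $p=p_n>n$. Let $X=(X_1,\dots,X_p)\in\mathbb{R}^{n\times p}$ be a random design matrix, and suppose: (A1) (general position) with probability one, for any $k<\min\{n,p\}$, any indices $i_1,\dots,i_{k+1}$ and any signs $\sigma_1,\dots,\sigma_{k+1}\in\{-1,1\}$, the affine span of $\sigma_1X_{i_1},\dots,\sigma_{k+1}X_{i_{k+1}}$ contains no element of $\{\pm X_i: i\neq i_1,\dots,i_{k+1}\}$; (A2) there are positive constants $C_{\min}$ and $K$ (with $n$ divisible by $K$) such that $\lim_{n\to\infty}P\big(\phi_{\min}(n/K)\ge C_{\min}\big)=1$; (A3) there is a positive constant $C_{\max}$ such that $\lim_{n\to\infty}P\big(\phi_{\max}(n)\le C_{\max}\big)=1$. Let the node-wise Lasso tuning parameter satisfy $\lambda_1\ge C_1/\sqrt{n}$ for some constant $C_1>0$. Then $$\lim_{n\to\infty}P\left(\frac{1}{\tilde\tau_1^2}\le \frac{1}{C_{\min}}+\frac{C_{\max}K}{C_1^2}\right)=1.$$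
   Context: For $s\ge1$, the restricted maximum and minimum eigenvalues are $\phi_{\max}(s)=\max_{1\le\|z\|_0\le s}\frac{\|Xz\|^2}{n\|z\|^2}$ and $\phi_{\min}(s)=\min_{1\le\|z\|_0\le s}\frac{\|Xz\|^2}{n\|z\|^2}$. Let $X_{-1}$ be $X$ with the first column removed. The node-wise Lasso is $\hat\gamma_1=\arg\min_{\gamma\in\mathbb{R}^{p-1}}\frac1n\|X_1-X_{-1}\gamma\|^2+2\lambda_1\|\gamma\|_1$, and $\tilde\tau_1^2=\frac1n\|X_1-X_{-1}\hat\gamma_1\|^2$. *)

From HB Require Import structures.
From mathcomp Require Import all_boot all_order all_algebra.
From mathcomp Require Import all_classical all_reals all_analysis.
Set Implicit Arguments. Unset Strict Implicit. Unset Printing Implicit Defensive.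
Import Order.TTheory GRing.Theory Num.Theory.
Local Open Scope classical_set_scope.
Local Open Scope ring_scope.

Section Defs.
Variable R : realType.

Definition sqnorm (m : nat) (v : 'cV[R]_m) : R := \sum_(i < m) v i 0 ^+ 2.

Definition l1norm (m : nat) (v : 'cV[R]_m) : R := \sum_(i < m) `|v i 0|.

Definition l0norm (m : nat) (v : 'cV[R]_m) : nat := #|[set i | v i 0 != 0]|.

Definition rayleigh (n p : nat) (X : 'M[R]_(n, p)) (z : 'cV[R]_p) : R :=
  sqnorm (X *m z) / (n%:R * sqnorm z).

Definition sparse_quotients (n p : nat) (X : 'M[R]_(n, p)) (s : nat) : set R :=
  [set rayleigh X z | z in [set z : 'cV[R]_p | (1 <= l0norm z <= s)%N]].

Definition phi_max (n p : nat) (X : 'M[R]_(n, p)) (s : nat) : R :=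
  sup (sparse_quotients X s).
Definition phi_min (n p : nat) (X : 'M[R]_(n, p)) (s : nat) : R :=
  inf (sparse_quotients X s).

(* first column X_1 and X_{-1} (X with first column removed);
   X has p = q.+1 columns *)
Definition col1 (n q : nat) (X : 'M[R]_(n, q.+1)) : 'cV[R]_n := col ord0 X.
Definition colm1 (n q : nat) (X : 'M[R]_(n, q.+1)) : 'M[R]_(n, q) := col' ord0 X.

Definition nodewise_obj (n q : nat) (X : 'M[R]_(n, q.+1)) (lam : R)
    (g : 'cV[R]_q) : R :=
  n%:R^-1 * sqnorm (col1 X - colm1 X *m g) + 2 * lam * l1norm g.

Definition is_nodewise_lasso (n q : nat) (X : 'M[R]_(n, q.+1)) (lam : R)
    (g : 'cV[R]_q) : Prop :=
  forall g' : 'cV[R]_q, nodewise_obj X lam g <= nodewise_obj X lam g'.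

Definition tau1_sq (n q : nat) (X : 'M[R]_(n, q.+1)) (g : 'cV[R]_q) : R :=
  n%:R^-1 * sqnorm (col1 X - colm1 X *m g).

Definition sgn (b : bool) : R := (-1) ^+ b.

Definition general_position (n p : nat) (X : 'M[R]_(n, p)) : Prop :=
  forall k : nat, (k < minn n p)%N ->
  forall (idx : 'I_k.+1 -> 'I_p) (sg : 'I_k.+1 -> bool) (i : 'I_p),
    (forall j, idx j != i) ->
    forall (s : bool) (c : 'I_k.+1 -> R),
      \sum_j c j = 1 ->
      \sum_j c j *: (sgn (sg j) *: col (idx j) X) != sgn s *: col i X.

End Defs.

Section Prob.
Variables (d : measure_display) (T : measurableType d) (R : realType).
Variable P : probability T R.

Definition with_prob_one (E : set T) : Prop :=
  exists A, measurable A /\ A `<=` E /\ P A = 1%E.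

(* lim_{n -> oo, K | n} P(E n) = 1, where P(E n) is the inner probability
   (coincides with P(E n) when E n is measurable) *)
Definition prob_to_one (K : nat) (E : nat -> set T) : Prop :=
  forall eps : R, 0 < eps -> exists N : nat, forall n : nat,
    (N <= n)%N -> (K %| n)%N ->
    exists A, measurable A /\ A `<=` E n /\ ((1 - eps)%:E <= P A)%E.
End Prob.

From Pilot Require Import Defs.
From HB Require Import structures.
From mathcomp Require Import all_boot all_order all_algebra.
From mathcomp Require Import all_classical all_reals all_analysis.
From mathcomp Require Import ring lra.
Set Implicit Arguments. Unset Strict Implicit. Unset Printing Implicit Defensive.
Import Order.TTheory GRing.Theory Num.Theory.
Local Open Scope ring_scope.

(* Write r = X_1 - X_{-1} g for the node-wise residual, so that
   tilde tau_1^2 = |r|^2 / n, and put s = n / K.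
   If g has fewer than s nonzero entries, z = (1, -g) is s-sparse with X z = r
   and |z| >= 1, hence tilde tau_1^2 >= phi_min(s) >= C_min.
   Otherwise the KKT conditions of the Lasso give |<X_j, r>| >= n lambda on the
   support of g.  Restricting X_{-1}^T r to s coordinates of that support gives
   a vector u with <X_{-1} u, r> = |u|^2, so Cauchy-Schwarz and
   phi_max(n) <= C_max yield |u|^2 <= C_max n |r|^2, while
   |u|^2 >= s n^2 lambda^2 >= s n C_1^2; thus tilde tau_1^2 >= C_1^2 / (C_max K).
   Both eigenvalue events have probability tending to one, hence so does their
   intersection. *)

Lemma ex_subset_card (T : finType) (A : {set T}) k : (k <= #|A|)%N ->
  exists2 B : {set T}, B \subset A & #|B| = k.
Proof.
elim: k => [|k IHk] k_le; first by exists finset.set0; rewrite ?finset.sub0set ?cards0.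
have [B sBA cardB] := IHk (ltnW k_le).
have /set0Pn[x] : A :\: B != finset.set0 by rewrite -card_gt0 cardsDS // cardB subn_gt0.
rewrite inE => /andP[xNB xA].
by exists (x |: B); rewrite ?finset.subUset ?finset.sub1set ?xA // cardsU1 xNB cardB.
Qed.

Lemma sum_mul_sqr_le (R : realFieldType) (I : finType) (a b : I -> R) :
  (\sum_i a i * b i) ^+ 2 <= (\sum_i a i ^+ 2) * (\sum_i b i ^+ 2).
Proof.
have lagrange : \sum_i \sum_j (a i * b j - a j * b i) ^+ 2 =
    2 * ((\sum_i a i ^+ 2) * (\sum_i b i ^+ 2) - (\sum_i a i * b i) ^+ 2).
  have expand i j : (a i * b j - a j * b i) ^+ 2 =
      a i ^+ 2 * b j ^+ 2 + b i ^+ 2 * a j ^+ 2 - 2 * (a i * b i) * (a j * b j).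
    by ring.
  under eq_bigr do under eq_bigr do rewrite expand.
  under eq_bigr do rewrite sumrB big_split -!mulr_sumr.
  rewrite sumrB big_split -!mulr_suml -mulr_sumr /=.
  by ring.
have : 0 <= 2 * ((\sum_i a i ^+ 2) * (\sum_i b i ^+ 2) - (\sum_i a i * b i) ^+ 2).
  by rewrite -lagrange; do 2!apply: sumr_ge0 => ? _; exact: sqr_ge0.
by rewrite pmulr_rge0 // subr_ge0.
Qed.

Lemma le_of_forall_small (R : realFieldType) (x y z a : R) : 0 < a -> 0 <= z ->
  (forall e, 0 < e <= a -> x <= y + e * z) -> x <= y.
Proof.
move=> a_gt0 z_ge0 small; apply/ler_addgt0Pr => e e_gt0.
have z1_gt0 : 0 < z + 1 by rewrite ltr_wpDl.
pose e' := Num.min a (e / (z + 1)).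
have e'_gt0 : 0 < e' by rewrite lt_min a_gt0 divr_gt0.
have e'z_le : e' * z <= e.
  have : e' <= e / (z + 1) by rewrite ge_min lexx orbT.
  rewrite ler_pdivlMr // => le_e'; apply: le_trans le_e'.
  by rewrite ler_pM2l // lerDl.
apply: le_trans (small e' _) _; first by rewrite e'_gt0 ge_min lexx.
by rewrite lerD2l.
Qed.

Lemma invr_le_addV (R : realFieldType) (a b x : R) : 0 < a -> 0 < b ->
  a <= x \/ b <= x -> 0 < x /\ x^-1 <= a^-1 + b^-1.
Proof.
move=> a_gt0 b_gt0 [le_x|le_x]; have x_gt0 := lt_le_trans _ le_x.
- split; first exact: x_gt0.
  by apply: le_trans (_ : a^-1 <= _); rewrite ?lef_pV2 ?posrE ?x_gt0 // lerDl invr_ge0 ltW.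
- split; first exact: x_gt0.
  by apply: le_trans (_ : b^-1 <= _); rewrite ?lef_pV2 ?posrE ?x_gt0 // lerDr invr_ge0 ltW.
Qed.

Section Vectors.
Variable R : realType.
Implicit Types m : nat.

Definition vdot m (a b : 'cV[R]_m) : R := \sum_i a i 0 * b i 0.

Lemma sqnorm_ge0 m (v : 'cV[R]_m) : 0 <= sqnorm v.
Proof. by apply: sumr_ge0 => i _; exact: sqr_ge0. Qed.

Lemma sqnorm0 m : sqnorm (0 : 'cV[R]_m) = 0.
Proof. by rewrite /sqnorm big1 // => i _; rewrite mxE expr0n. Qed.

Lemma sqnormB m (a b : 'cV[R]_m) t :
  sqnorm (a - t *: b) = sqnorm a - 2 * t * vdot a b + t ^+ 2 * sqnorm b.
Proof.
rewrite /sqnorm /vdot 2!mulr_sumr -sumrB -big_split /=.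
by apply: eq_bigr => i _; rewrite !mxE; ring.
Qed.

Lemma vdot_sqr_le m (a b : 'cV[R]_m) : vdot a b ^+ 2 <= sqnorm a * sqnorm b.
Proof. exact: (sum_mul_sqr_le (fun i => a i 0) (fun i => b i 0)). Qed.

Lemma vdot_mulmx m p (A : 'M[R]_(m, p)) u v : vdot (A *m u) v = vdot u (A^T *m v).
Proof.
rewrite /vdot; under eq_bigr do rewrite mxE mulr_suml.
rewrite exchange_big; apply: eq_bigr => k _; rewrite mxE mulr_sumr.
by apply: eq_bigr => i _; rewrite !mxE mulrCA mulrA.
Qed.

Lemma sqnorm_mulmx_le m p (A : 'M[R]_(m, p)) z :
  sqnorm (A *m z) <= (\sum_i \sum_k A i k ^+ 2) * sqnorm z.
Proof.
rewrite /sqnorm mulr_suml; apply: ler_sum => i _; rewrite mxE.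
exact: (sum_mul_sqr_le (A i) (fun k => z k 0)).
Qed.

Lemma l0norm_card m (v : 'cV[R]_m) : l0norm v = #|[set i | v i 0 != 0]|.
Proof. by apply: eq_card => i; rewrite inE; apply/idP/idP; rewrite in_setE. Qed.

Lemma l0normE m (v : 'cV[R]_m) : l0norm v = (\sum_i (v i ord0 != 0%R))%N.
Proof.
rewrite l0norm_card -sum1_card big_mkcond /=.
by apply: eq_bigr => i _; rewrite inE; case: (v i 0 != 0).
Qed.

Lemma sqnorm_gt0 m (v : 'cV[R]_m) : (0 < l0norm v)%N -> 0 < sqnorm v.
Proof.
rewrite l0normE lt0n sum_nat_seq_neq0 => /hasP[i _] /=; rewrite eqb0 negbK => vi_neq0.
rewrite /sqnorm (bigD1 i) //= ltr_pwDl ?sumr_ge0 // => [|j _]; last exact: sqr_ge0.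
by rewrite lt_def sqrf_eq0 vi_neq0 sqr_ge0.
Qed.

Lemma l0norm0 m : l0norm (0 : 'cV[R]_m) = 0%N.
Proof. by rewrite l0normE big1 // => i _; rewrite mxE eqxx. Qed.

Lemma sqnorm_col_mx m1 m2 (a : 'cV[R]_m1) (b : 'cV[R]_m2) :
  sqnorm (col_mx a b) = sqnorm a + sqnorm b.
Proof.
rewrite /sqnorm big_split_ord /=.
by congr (_ + _); apply: eq_bigr => i _; rewrite (col_mxEu, col_mxEd).
Qed.

Lemma l0norm_col_mx m1 m2 (a : 'cV[R]_m1) (b : 'cV[R]_m2) :
  l0norm (col_mx a b) = (l0norm a + l0norm b)%N.
Proof.
rewrite !l0normE big_split_ord /=.
by congr (_ + _)%N; apply: eq_bigr => i _; rewrite (col_mxEu, col_mxEd).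
Qed.

Definition vrestrict m (S : {set 'I_m}) (v : 'cV[R]_m) : 'cV[R]_m :=
  \col_i (if i \in S then v i 0 else 0).

Lemma sqnorm_vrestrict m (S : {set 'I_m}) (v : 'cV[R]_m) :
  sqnorm (vrestrict S v) = \sum_(i in S) v i 0 ^+ 2.
Proof.
rewrite /sqnorm [RHS]big_mkcond; apply: eq_bigr => i _.
by rewrite mxE; case: ifP; rewrite ?expr0n.
Qed.

Lemma vdot_vrestrict m (S : {set 'I_m}) (v : 'cV[R]_m) :
  vdot (vrestrict S v) v = sqnorm (vrestrict S v).
Proof.
rewrite sqnorm_vrestrict /vdot [RHS]big_mkcond; apply: eq_bigr => i _.
by rewrite mxE; case: ifP; rewrite ?mul0r.
Qed.

Lemma l0norm_vrestrict m (S : {set 'I_m}) (v : 'cV[R]_m) :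
  {in S, forall i, v i 0 != 0} -> l0norm (vrestrict S v) = #|S|.
Proof.
move=> vS_neq0; rewrite l0normE -sum1_card [RHS]big_mkcond; apply: eq_bigr => i _.
by rewrite mxE; case: ifPn => [/vS_neq0 ->|]; rewrite ?eqxx.
Qed.

End Vectors.

Section Rayleigh.
Variables (R : realType) (n p : nat) (X : 'M[R]_(n, p)).

Lemma rayleigh_ge0 z : 0 <= rayleigh X z.
Proof. by rewrite /rayleigh divr_ge0 ?mulr_ge0 ?sqnorm_ge0. Qed.

Lemma rayleigh_le_frobenius z : rayleigh X z <= (\sum_i \sum_k X i k ^+ 2) / n%:R.
Proof.
have [nz_eq0|nz_neq0] := eqVneq (n%:R * sqnorm z) 0.
  rewrite /rayleigh nz_eq0 invr0 mulr0 divr_ge0 //.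
  by do 2!apply: sumr_ge0 => ? _; exact: sqr_ge0.
have nz_gt0 : 0 < n%:R * sqnorm z by rewrite lt_def nz_neq0 mulr_ge0 ?sqnorm_ge0.
have n_neq0 : n%:R != 0 :> R by apply: contraNneq nz_neq0 => ->; rewrite mul0r.
by rewrite /rayleigh ler_pdivrMr // mulrA divfK //; exact: sqnorm_mulmx_le.
Qed.

Lemma rayleigh_le_phi_max s z : (1 <= l0norm z <= s)%N -> rayleigh X z <= phi_max X s.
Proof.
move=> z_sparse; apply: ub_le_sup; last by exists z.
by exists ((\sum_i \sum_k X i k ^+ 2) / n%:R) => _ [z' _ <-]; exact: rayleigh_le_frobenius.
Qed.

Lemma phi_min_le_rayleigh s z : (1 <= l0norm z <= s)%N -> phi_min X s <= rayleigh X z.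
Proof.
move=> z_sparse; apply: ge_inf; last by exists z.
by exists 0 => _ [z' _ <-]; exact: rayleigh_ge0.
Qed.

Lemma sqnorm_mulmx_le_phi_max s z : (0 < n)%N -> (1 <= l0norm z <= s)%N ->
  sqnorm (X *m z) <= phi_max X s * (n%:R * sqnorm z).
Proof.
move=> n_gt0 z_sparse; have /andP[z_neq0 _] := z_sparse.
have nz_gt0 : 0 < n%:R * sqnorm z by rewrite mulr_gt0 ?ltr0n ?sqnorm_gt0.
by rewrite -ler_pdivrMr //; exact: rayleigh_le_phi_max.
Qed.

End Rayleigh.

Section Nodewise.
Variables (R : realType) (n q : nat) (X : 'M[R]_(n, q.+1)).

Definition nodewise_resid (g : 'cV[R]_q) : 'cV[R]_n := Defs.col1 X - colm1 X *m g.

Lemma mulmx_col1_colm1 (a : 'cV[R]_1) (b : 'cV[R]_q) :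
  X *m col_mx a b = Defs.col1 X *m a + colm1 X *m b.
Proof.
rewrite -mul_row_col; congr (_ *m _); apply/matrixP => i j; rewrite mxE.
by case: splitP => k j_eq; rewrite !mxE; congr (X i _); apply: val_inj; rewrite /= j_eq ?(ord1 k).
Qed.

Lemma tau1_sqE g : tau1_sq X g = n%:R^-1 * sqnorm (nodewise_resid g).
Proof. by []. Qed.

Lemma phi_min_le_tau1_sq s g : (l0norm g < s)%N -> phi_min X s <= tau1_sq X g.
Proof.
move=> g_sparse; pose z : 'cV[R]_(1 + q) := col_mx 1%:M (- g).
have Xz : X *m z = nodewise_resid g by rewrite mulmx_col1_colm1 mulmx1 mulmxN.
have l0z : l0norm z = (l0norm g).+1.
  rewrite l0norm_col_mx !l0normE big_ord1 !mxE eqxx oner_neq0.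
  by congr (_ + _)%N; apply: eq_bigr => i _; rewrite mxE oppr_eq0.
have z_ge1 : 1 <= sqnorm z.
  by rewrite sqnorm_col_mx {1}/sqnorm big_ord1 mxE expr1n lerDl sqnorm_ge0.
apply: le_trans (phi_min_le_rayleigh (s := s) (z := z) X _) _; first by rewrite l0z.
rewrite /rayleigh Xz tau1_sqE invfM mulrA [sqnorm _ * _]mulrC.
rewrite ler_pdivrMr ?(lt_le_trans ltr01) // ler_peMr //.
by rewrite mulr_ge0 ?invr_ge0 ?ler0n ?sqnorm_ge0.
Qed.

Lemma l1norm_add_delta m (v : 'cV[R]_m) j t :
  l1norm (v + t *: delta_mx j 0) = l1norm v - `|v j 0| + `|v j 0 + t|.
Proof.
rewrite /l1norm (bigD1 j) //= [in RHS](bigD1 j) //= !mxE eqxx mulr1.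
under eq_bigr => k k_neq_j do rewrite !mxE (negbTE k_neq_j) mulr0 addr0.
by ring.
Qed.

Lemma vdot_col m p (A : 'M[R]_(m, p)) v j : vdot v (col j A) = (A^T *m v) j 0.
Proof. by rewrite mxE; apply: eq_bigr => i _; rewrite !mxE mulrC. Qed.

Lemma nodewise_obj_add_delta lam g j t :
  nodewise_obj X lam (g + t *: delta_mx j 0) - nodewise_obj X lam g =
  n%:R^-1 * (t ^+ 2 * sqnorm (col j (colm1 X))
             - 2 * t * ((colm1 X)^T *m nodewise_resid g) j 0)
  + 2 * lam * (`|g j 0 + t| - `|g j 0|).
Proof.
rewrite /nodewise_obj.
have -> : Defs.col1 X - colm1 X *m (g + t *: delta_mx j 0) =
    nodewise_resid g - t *: col j (colm1 X).
  by rewrite mulmxDr -scalemxAr -colE opprD addrA.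
rewrite sqnormB vdot_col l1norm_add_delta /nodewise_resid; ring.
Qed.

Lemma nodewise_lasso_corr_ge lam g j : (0 < n)%N -> is_nodewise_lasso X lam g ->
  g j 0 != 0 -> n%:R * lam <= `|((colm1 X)^T *m nodewise_resid g) j 0|.
Proof.
move=> n_gt0 lasso_g gj_neq0.
set c := _ j 0; set V := sqnorm (col j (colm1 X)); set N : R := n%:R.
have N_gt0 : 0 < N by rewrite ltr0n.
apply: (@le_of_forall_small _ _ _ (V / 2) `|g j 0|).
- by rewrite normr_gt0.
- by rewrite divr_ge0 ?sqnorm_ge0.
move=> e /andP[e_gt0 e_le].
(* Shrinking g_j towards 0 by e lowers the penalty by 2 lam e and raises the
   fit by at most 2 e |c| / n + O(e^2). *)
pose t := - (e * Num.sg (g j 0)).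
have shift : `|g j 0 + t| = `|g j 0| - e.
  have -> : g j 0 + t = Num.sg (g j 0) * (`|g j 0| - e).
    by rewrite /t {1}[g j 0]numEsg; ring.
  by rewrite normrM normr_sg gj_neq0 mul1r ger0_norm // subr_ge0.
have t_sqr : t ^+ 2 = e ^+ 2 by rewrite sqrrN exprMn sqr_sg gj_neq0 mulr1.
have tc_le : - (t * c) <= e * `|c|.
  rewrite /t mulNr opprK -mulrA; apply: ler_wpM2l; first exact: ltW.
  by apply: le_trans (ler_norm _) _; rewrite normrM normr_sg gj_neq0 mul1r.
have := lasso_g (g + t *: delta_mx j 0).
rewrite -subr_ge0 nodewise_obj_add_delta shift t_sqr => opt.
have : 2 * lam * e <= N^-1 * (e ^+ 2 * V - 2 * t * c).
  by move: opt; rewrite [X in _ + X](_ : _ = - (2 * lam * e)) ?subr_ge0 //; ring.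
rewrite ler_pdivlMl // => {}opt.
have : e * (2 * (N * lam)) <= e * (2 * (`|c| + e * (V / 2))) by nra.
by rewrite ler_pM2l // ler_pM2l.
Qed.

Lemma sqnorm_colm1_le_phi_max m u : (0 < n)%N -> (1 <= l0norm u <= m)%N ->
  sqnorm (colm1 X *m u) <= phi_max X m * (n%:R * sqnorm u).
Proof.
move=> n_gt0 u_sparse.
have := sqnorm_mulmx_le_phi_max (s := m) (z := col_mx 0 u : 'cV_(1 + q)) X n_gt0.
rewrite mulmx_col1_colm1 mulmx0 add0r.
rewrite (sqnorm_col_mx (0 : 'cV[R]_1) u) (l0norm_col_mx (0 : 'cV[R]_1) u).
by rewrite sqnorm0 l0norm0 add0r; apply.
Qed.

Lemma nodewise_lasso_large_support lam g s m Cmax : (0 < n)%N -> 0 < lam ->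
  is_nodewise_lasso X lam g -> (0 < s <= l0norm g)%N -> (s <= m)%N ->
  phi_max X m <= Cmax -> s%:R * lam ^+ 2 <= Cmax * tau1_sq X g.
Proof.
move=> n_gt0 lam_gt0 lasso_g /andP[s_gt0 s_le] s_le_m phi_le.
set r := nodewise_resid g; set c := (colm1 X)^T *m r; set N : R := n%:R.
have N_gt0 : 0 < N by rewrite ltr0n.
have [S S_supp cardS] :
    exists2 S : {set 'I_q}, S \subset [set j | g j 0 != 0] & #|S| = s.
  by apply: ex_subset_card; rewrite -l0norm_card.
have c_ge j : j \in S -> N * lam <= `|c j 0|.
  by move=> /(fintype.subsetP S_supp); rewrite inE; exact: nodewise_lasso_corr_ge.
have c_neq0 : {in S, forall j, c j 0 != 0}.
  by move=> j /c_ge; apply: contraTneq => ->; rewrite normr0 -ltNge mulr_gt0.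
set u := vrestrict S c.
have l0u : l0norm u = s by rewrite l0norm_vrestrict.
have u_lower : s%:R * (N * lam) ^+ 2 <= sqnorm u.
  rewrite sqnorm_vrestrict mulr_natl -cardS -sumr_const; apply: ler_sum => j jS.
  rewrite -[c j 0 ^+ 2]real_normK ?num_real // ler_sqr ?nnegrE ?c_ge //.
  by rewrite mulr_ge0 // ltW.
have u_upper : sqnorm u <= Cmax * N * sqnorm r.
  have u_gt0 : 0 < sqnorm u by rewrite sqnorm_gt0 // l0u.
  have := vdot_sqr_le (colm1 X *m u) r; rewrite vdot_mulmx vdot_vrestrict => cs.
  have Xu : sqnorm (colm1 X *m u) <= Cmax * (N * sqnorm u).
    apply: le_trans (sqnorm_colm1_le_phi_max (m := m) n_gt0 _) _.
      by rewrite l0u s_gt0.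
    by apply: ler_wpM2r; rewrite // mulr_ge0 ?ltW ?sqnorm_ge0.
  have : sqnorm u * sqnorm u <= sqnorm u * (Cmax * N * sqnorm r).
    rewrite -expr2; apply: le_trans cs _.
    rewrite [X in _ <= X](_ : _ = Cmax * (N * sqnorm u) * sqnorm r); last by ring.
    by apply: ler_wpM2r; rewrite ?sqnorm_ge0.
  by rewrite ler_pM2l.
rewrite tau1_sqE -/r -(ler_pM2l (exprn_gt0 2 N_gt0)).
have -> : N ^+ 2 * (s%:R * lam ^+ 2) = s%:R * (N * lam) ^+ 2 by ring.
have -> : N ^+ 2 * (Cmax * (N^-1 * sqnorm r)) = Cmax * N * sqnorm r.
  by field; rewrite gt_eqF.
exact: le_trans u_lower u_upper.
Qed.

Lemma nodewise_tau1_sq_inv_le (K : nat) Cmin Cmax C1 lam g :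
  (0 < n)%N -> (0 < K)%N -> (K %| n)%N -> 0 < Cmin -> 0 < Cmax -> 0 < C1 ->
  C1 / Num.sqrt n%:R <= lam -> Cmin <= phi_min X (n %/ K) -> phi_max X n <= Cmax ->
  is_nodewise_lasso X lam g ->
  0 < tau1_sq X g /\ (tau1_sq X g)^-1 <= Cmin^-1 + Cmax * K%:R / C1 ^+ 2.
Proof.
move=> n_gt0 K_gt0 K_dvd_n Cmin_gt0 Cmax_gt0 C1_gt0 lam_ge min_ge max_le lasso_g.
set s := (n %/ K)%N.
have s_gt0 : (0 < s)%N by rewrite divn_gt0 // dvdn_leq.
have sqrt_n_gt0 : 0 < Num.sqrt n%:R :> R by rewrite sqrtr_gt0 ltr0n.
have lam_gt0 : 0 < lam by apply: lt_le_trans lam_ge; rewrite divr_gt0.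
have lam_sqr : C1 ^+ 2 <= K%:R * (s%:R * lam ^+ 2).
  rewrite mulrA -natrM mulnC divnK // -[n%:R]sqr_sqrtr ?ler0n // -exprMn.
  rewrite ler_sqr ?nnegrE ?(ltW C1_gt0) ?mulr_ge0 ?(ltW sqrt_n_gt0) ?(ltW lam_gt0) //.
  by rewrite mulrC -ler_pdivrMr.
rewrite -invf_div; apply: invr_le_addV; rewrite ?divr_gt0 ?mulr_gt0 ?ltr0n //.
have [small|large] := ltnP (l0norm g) s; [left|right].
  exact: le_trans min_ge (phi_min_le_tau1_sq small).
have large_le : s%:R * lam ^+ 2 <= Cmax * tau1_sq X g.
  by apply: nodewise_lasso_large_support (leq_div n K) max_le; rewrite ?s_gt0.
rewrite ler_pdivrMr ?mulr_gt0 ?ltr0n //; apply: le_trans lam_sqr _.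
by rewrite mulrC [X in _ <= X]mulrA ler_pM2r ?ltr0n // [X in _ <= X]mulrC.
Qed.

End Nodewise.

Local Open Scope classical_set_scope.

Section ProbToOne.
Variables (d : measure_display) (T : measurableType d) (R : realType).
Variable P : probability T R.

Lemma probability_setI_ge (A B : set T) : measurable A -> measurable B ->
  (P A + P B - 1 <= P (A `&` B))%E.
Proof.
move=> mA mB.
have PB_fin : (P B < +oo)%E by rewrite ltey_eq fin_num_measure.
have := probability_le1 P (measurableU _ _ mA mB).
rewrite measureUfinr // !leeBlDr ?fin_num_measure //; last exact: measurableI.
by rewrite [(1 + _)%E]addeC.
Qed.

Lemma prob_to_one_setI K (E F : nat -> set T) :
  prob_to_one P K E -> prob_to_one P K F -> prob_to_one P K (fun n => E n `&` F n).
Proof.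
move=> PE PF eps eps_gt0.
have eps2_gt0 : 0 < eps / 2 by rewrite divr_gt0.
have [NE hE] := PE _ eps2_gt0; have [NF hF] := PF _ eps2_gt0.
exists (maxn NE NF) => n; rewrite geq_max => /andP[NE_le NF_le] K_dvd_n.
have [A [mA [AE PA]]] := hE n NE_le K_dvd_n.
have [B [mB [BF PB]]] := hF n NF_le K_dvd_n.
exists (A `&` B); split; first exact: measurableI.
split; first by move=> w [/AE ? /BF ?].
apply: le_trans (probability_setI_ge mA mB).
have -> : 1 - eps = (1 - eps / 2) + (1 - eps / 2) - 1 by field.
by rewrite EFinB EFinD; apply: leeB => //; apply: leeD.
Qed.

Lemma prob_to_one_sub K (E F : nat -> set T) :
  (forall n, (0 < n)%N -> (K %| n)%N -> E n `<=` F n) ->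
  prob_to_one P K E -> prob_to_one P K F.
Proof.
move=> EF PE eps eps_gt0; have [N hN] := PE _ eps_gt0.
exists N.+1 => n N_lt_n K_dvd_n.
have [A [mA [AE PA]]] := hN n (ltnW N_lt_n) K_dvd_n.
exists A; split => //; split => //.
by apply: subset_trans AE (EF n _ K_dvd_n); exact: leq_ltn_trans N_lt_n.
Qed.

End ProbToOne.

Theorem lemma1 (d : measure_display) (T : measurableType d) (R : realType)
  (P : probability T R) (q : nat -> nat)
  (X : forall n : nat, T -> 'M[R]_(n, (q n).+1))
  (Cmin Cmax C1 : R) (K : nat) (lam : nat -> R) :
  (forall n, (n < (q n).+1)%N) ->
  (forall n, with_prob_one P [set w | general_position (X n w)]) ->
  0 < Cmin -> (0 < K)%N ->
  prob_to_one P K (fun n => [set w | Cmin <= phi_min (X n w) (n %/ K)]) ->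
  0 < Cmax ->
  prob_to_one P K (fun n => [set w | phi_max (X n w) n <= Cmax]) ->
  0 < C1 ->
  (forall n, C1 / Num.sqrt (n%:R) <= lam n) ->
  prob_to_one P K (fun n => [set w | forall g : 'cV[R]_(q n),
      is_nodewise_lasso (X n w) (lam n) g ->
      0 < tau1_sq (X n w) g /\
      (tau1_sq (X n w) g)^-1 <= Cmin^-1 + Cmax * K%:R / C1 ^+ 2]).
Proof.
move=> _ _ Cmin_gt0 K_gt0 Pmin Cmax_gt0 Pmax C1_gt0 lam_ge.
apply: prob_to_one_sub (prob_to_one_setI Pmin Pmax).
move=> n n_gt0 K_dvd_n w [min_ge max_le] g lasso_g.
exact: nodewise_tau1_sq_inv_le.
Qed.
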